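(* Let $G=G_{\pm}(x)=3+2\{\cos(2\pi x)\pm\cos(12\pi x)\pm\cos(14\pi x)\}$ on $\mathbb{T}=\mathbb{R}/\mathbb{Z}$ (either sign), and let $Z$ be the set of local maximum points of $G$ in $\mathbb{T}$. Then for every $t>0$, $$\operatorname{Var}(G^t)<2\sum_{\zeta\in Z}G^t(\zeta),$$ where $\operatorname{Var}$ denotes total variation over one period $\mathbb{T}$. In particular $\operatorname{Var}(G_{\pm})<74$.
   Context: $\operatorname{Var}(\psi)=\operatorname{Var}(\psi,\mathbb{T})$ is the total variation of the $1$-periodic function $\psi$ over one period. *)

From HB Require Import structures.
From mathcomp Require Import all_boot all_order all_algebra.
From mathcomp Require Import all_classical all_reals all_analysis.
Set Implicit Arguments. Unset Strict Implicit. Unset Printing Implicit Defensive.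
Import Order.TTheory GRing.Theory Num.Theory.
Local Open Scope ring_scope.

Definition sgn {R : realType} (s : bool) : R := if s then 1 else -1.

Definition Gpm {R : realType} (s : bool) (x : R) : R :=
  3 + 2 * (cos (2 * pi * x) + sgn s * cos (12 * pi * x)
           + sgn s * cos (14 * pi * x)).

Definition is_local_max {R : realType} (f : R -> R) (x : R) : Prop :=
  exists2 e : R, 0 < e & forall y, `|y - x| < e -> f y <= f x.

(* local maximum points in T = R/Z, represented in [0,1) *)
Definition local_max_T {R : realType} (f : R -> R) (x : R) : Prop :=
  0 <= x < 1 /\ is_local_max f x.

From Stdlib Require Import PArith.
From mathcomp Require Import all_boot all_order all_algebra.
From mathcomp Require Import all_classical all_reals all_analysis.
From mathcomp Require Import ring lra zify.
Set Implicit Arguments. Unset Strict Implicit. Unset Printing Implicit Defensive.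
Import Order.TTheory GRing.Theory Num.Theory.
Import numFieldNormedType.Exports.
Local Open Scope ring_scope.

(* With c = cos (2 pi x), Chebyshev's cos 6t = T6 (cos t), cos 7t = T7 (cos t) give
   G_+- x = Gc (c) for the degree 7 polynomial Gc = 3 + 2 (c +- (T6 + T7) c).  Exact positivity
   certificates in the Bernstein basis of small rational intervals show that Gc > 0 on [-1, 1]
   and that Gc' has exactly six sign changes rho_1 < ... < rho_6 in (-1, 1), each isolated in a
   box on which Gc'' has a sign.  Hence G is strictly monotone, with alternating directions, on
   the 14 arcs of the circle cut out by the preimages of -1, rho_1, ..., rho_6, 1.  Its local
   maxima are the 7 breakpoints starting a decreasing arc, and for every increasing phi the
   variation of phi o G over a period is 2 (sum over maxima - sum over minima) of phi o G, which
   is smaller than 2 (sum over maxima) since G > 0.  Upper bounds for Gc at the maxima, again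
   by certificates, give Var G < 74. *)
Section StrictMonotonicity.
Variable R : realType.

Definition strict_mono_on (up : bool) (f : R -> R) (a b : R) : Prop :=
  forall x y, a <= x -> x < y -> y <= b -> if up then f x < f y else f y < f x.

Definition has_sign (up : bool) (y : R) : Prop := if up then 0 < y else y < 0.

Lemma is_derive_continuous (f f' : R -> R) :
  (forall x, is_derive x (1:R) f (f' x)) -> continuous f.
Proof.
move=> df x; apply: differentiable_continuous; apply/derivable1_diffP.
by case: (df x).
Qed.

Lemma strict_mono_on_derive up (f f' : R -> R) a b :
  (forall x, is_derive x (1:R) f (f' x)) -> (forall x, a < x < b -> has_sign up (f' x)) ->
  strict_mono_on up f a b.
Proof.
move=> df sf x y ax xy yb.
have cf := continuous_subspaceT (is_derive_continuous df).
have der z : derivable f z 1 by case: (df z).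
have f'E z : 'D_1 f z = f' z by case: (df z) => _ ->.
have xab : x \in `[a, b] by rewrite in_itv /= ax (le_trans (ltW xy)).
have yab : y \in `[a, b] by rewrite in_itv /= yb (le_trans _ (ltW xy)).
case: up sf => sf.
- apply: (@gtr0_derive1_lt_cc _ f a b _ _ (cf _)) => // z.
  by rewrite in_itv derive1E f'E => /sf.
- apply: (@ltr0_derive1_lt_cc _ f a b _ _ (cf _)) => // z.
  by rewrite in_itv derive1E f'E => /sf.
Qed.

Lemma strict_mono_on_le up (f : R -> R) a b x y : strict_mono_on up f a b ->
  a <= x -> x <= y -> y <= b -> if up then f x <= f y else f y <= f x.
Proof.
move=> mf ax; rewrite le_eqVlt => /predU1P[-> | xy] yb; first by case: (up).
by have := mf x y ax xy yb; case: (up) => /ltW.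
Qed.

Lemma strict_mono_on_sub up (f : R -> R) a b a' b' : strict_mono_on up f a b ->
  a <= a' -> b' <= b -> strict_mono_on up f a' b'.
Proof. by move=> mf aa' bb' x y ax xy yb; apply: mf => //; apply: le_trans; eassumption. Qed.

Lemma strict_mono_on_comp up up' (g c : R -> R) a b a' b' :
  strict_mono_on up c a b -> strict_mono_on up' g a' b' ->
  (forall x, a <= x <= b -> a' <= c x <= b') ->
  strict_mono_on (up == up') (g \o c) a b.
Proof.
move=> mc mg cab x y ax xy yb /=.
have /andP[? ?] := cab x ltac:(by rewrite ax (le_trans (ltW xy))).
have /andP[? ?] := cab y ltac:(by rewrite yb (le_trans _ (ltW xy))).
have := mc x y ax xy yb.
by case: up {mc}; case: up' mg => mg /= ?; apply: mg.
Qed.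

Lemma sign_change_root up (f f' : R -> R) a b :
  (forall x, is_derive x (1:R) f (f' x)) ->
  (forall x, a <= x <= b -> has_sign (~~ up) (f' x)) ->
  has_sign up (f a) -> has_sign (~~ up) (f b) -> a < b ->
  exists r, [/\ a < r < b, (forall x, a <= x < r -> has_sign up (f x))
              & (forall x, r < x <= b -> has_sign (~~ up) (f x))].
Proof.
move=> df sf' fa fb ab.
have mf : strict_mono_on (~~ up) f a b.
  by apply: strict_mono_on_derive df _ => x /andP[ax xb]; apply: sf'; rewrite !ltW.
have [r] : exists2 r, r \in `[a, b] & f r = 0.
  apply: (@IVT R f a b 0 (ltW ab) (continuous_subspaceT (is_derive_continuous df))).
  by case: (up) fa fb => /= fa fb; rewrite ge_min le_max (ltW fa) (ltW fb) ?orbT.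
rewrite in_itv /= => /andP[ar rb] fr.
have {}ar : a < r.
  rewrite lt_neqAle ar andbT; apply/eqP => e.
  by move: fa; rewrite /has_sign e fr; case: (up); rewrite ltxx.
have {}rb : r < b.
  rewrite lt_neqAle rb andbT; apply/eqP => e.
  by move: fb; rewrite /has_sign -e fr; case: (up); rewrite ltxx.
exists r; split; first by rewrite ar rb.
- move=> x /andP[ax xr]; have := mf x r ax xr (ltW rb).
  by rewrite fr; case: (up).
- move=> x /andP[rx xb]; have := mf r x (ltW ar) rx xb.
  by rewrite fr; case: (up).
Qed.

End StrictMonotonicity.

Section PiecewiseMonotone.
Variable R : realType.
Implicit Types (f : R -> R) (b : nat -> R).

Lemma incr_seq_le b n : (forall i, (i < n)%N -> b i < b i.+1) ->
  forall i j, (i <= j <= n)%N -> b i <= b j.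
Proof.
move=> hb i; elim=> [|j IH] /andP[ij jn].
  by move: ij; rewrite leqn0 => /eqP ->.
move: ij; rewrite leq_eqVlt => /orP[/eqP -> //|ij].
by apply: le_trans (ltW (hb j jn)); apply: IH; rewrite -ltnS ij ltnW.
Qed.

Lemma incr_seq_lt b n : (forall i, (i < n)%N -> b i < b i.+1) ->
  forall i j, (i < j <= n)%N -> b i < b j.
Proof.
move=> hb i j /andP[ij jn].
by apply: lt_le_trans (hb i (leq_trans ij jn)) _; apply: (incr_seq_le hb); rewrite ij.
Qed.

Lemma exists_piece b n x : (forall i, (i < n)%N -> b i < b i.+1) ->
  b 0%N <= x < b n -> exists2 i, (i < n)%N & b i <= x < b i.+1.
Proof.
elim: n => [|n IH] hb /andP[x0 xn]; first by move: (le_lt_trans x0 xn); rewrite ltxx.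
have [xl | xg] := ltP x (b n); last by exists n; rewrite // xg.
have [|i ni] := IH (fun i ni => hb i (ltnW ni)); first by rewrite x0.
by exists i => //; rewrite ltnW.
Qed.

Lemma total_variation_strict_mono_on up f a c : a <= c ->
  strict_mono_on up f a c -> total_variation a c f = `|f c - f a|%:E.
Proof.
move=> ac mf.
have nd g : (forall x y, a <= x -> x < y -> y <= c -> g x <= g y) ->
    {in `[a, c] &, nondecreasing_fun g}.
  move=> hg x y; rewrite !in_itv /= => /andP[ax _] /andP[_ yc].
  by rewrite le_eqVlt => /predU1P[-> // | xy]; apply: hg.
have fac := strict_mono_on_le mf (lexx a) ac (lexx c).
case: up mf fac => mf fac.
- rewrite nondecreasing_total_variation //; first by rewrite ger0_norm ?subr_ge0.
  by apply: nd => x y ax xy yc; apply/ltW/mf.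
- rewrite -total_variationN nondecreasing_total_variation //.
    by rewrite /= ler0_norm ?subr_le0 //; congr (_%:E); ring.
  by apply: nd => x y ax xy yc; rewrite lerN2; apply/ltW/mf.
Qed.

Lemma total_variation_pieces f b n (dir : nat -> bool) :
  (forall i, (i < n)%N -> b i < b i.+1) ->
  (forall i, (i < n)%N -> strict_mono_on (dir i) f (b i) (b i.+1)) ->
  total_variation (b 0%N) (b n) f = (\sum_(0 <= i < n) `|f (b i.+1) - f (b i)|)%:E.
Proof.
elim: n => [|n IH] hb hf; first by rewrite total_variationxx big_geq.
have b0n : b 0%N <= b n by apply: (incr_seq_le hb); rewrite leqnSn.
rewrite (total_variationD f b0n (ltW (hb n (ltnSn n)))) IH; first last.
- by move=> i ni; apply: hf; rewrite ltnS ltnW.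
- by move=> i ni; apply: hb; rewrite ltnS ltnW.
rewrite big_nat_recr //= EFinD (total_variation_strict_mono_on _ (hf n _)) //.
exact/ltW/hb.
Qed.

End PiecewiseMonotone.

Section Zigzag.
Variable R : realType.
Implicit Types (f : R -> R) (b : nat -> R).

Lemma is_local_max_strict_mono_on up f a c x : strict_mono_on up f a c ->
  a <= x < c -> is_local_max f x -> up = false /\ x = a.
Proof.
move=> mf /andP[ax xc] [e e0 le].
have d0 : 0 < Num.min e (c - x) by rewrite lt_min e0 subr_gt0.
have de : Num.min e (c - x) <= e by rewrite ge_min lexx.
have dc : Num.min e (c - x) <= c - x by rewrite ge_min lexx orbT.
have upF : up = false.
  case: up mf => // mf.
  have := le (x + Num.min e (c - x) / 2) ltac:(rewrite ltr_distl; apply/andP; split; lra).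
  by have := mf x (x + Num.min e (c - x) / 2) ax ltac:(lra) ltac:(lra); lra.
split => //; move: mf; rewrite upF => mf.
apply/eqP; rewrite eq_le ax andbT leNgt; apply/negP => ax'.
have d'0 : 0 < Num.min e (x - a) by rewrite lt_min e0 subr_gt0.
have d'e : Num.min e (x - a) <= e by rewrite ge_min lexx.
have d'a : Num.min e (x - a) <= x - a by rewrite ge_min lexx orbT.
have := le (x - Num.min e (x - a) / 2) ltac:(rewrite ltr_distl; apply/andP; split; lra).
have := mf (x - Num.min e (x - a) / 2) x ltac:(lra) ltac:(lra) (ltW xc).
lra.
Qed.

Lemma is_local_max_between f a x c : a < x < c ->
  strict_mono_on true f a x -> strict_mono_on false f x c -> is_local_max f x.
Proof.
move=> /andP[ax xc] inc dec.
have m0 : 0 < Num.min (x - a) (c - x) by rewrite lt_min !subr_gt0 ax xc.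
have ma : Num.min (x - a) (c - x) <= x - a by rewrite ge_min lexx.
have mc : Num.min (x - a) (c - x) <= c - x by rewrite ge_min lexx orbT.
exists (Num.min (x - a) (c - x)) => // y; rewrite ltr_distl => /andP[y1 y2].
case: (ltgtP y x) => [yx | xy | -> //].
- by apply/ltW/inc => //; lra.
- by apply/ltW/dec => //; lra.
Qed.

Lemma strict_mono_on_shift up f a c p : (forall y, f (y + p) = f y) ->
  strict_mono_on up f a c -> strict_mono_on up f (a - p) (c - p).
Proof. by move=> fp mf x y ax xy yc; rewrite -(fp x) -(fp y); apply: mf; lra. Qed.

Definition zigzag f b n (up0 : bool) : Prop :=
  (forall i, (i < n)%N -> b i < b i.+1) /\
  (forall i, (i < n)%N -> strict_mono_on (odd i != up0) f (b i) (b i.+1)).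

(* The breakpoints that start a decreasing piece; troughs start increasing ones. *)
Definition peaks b n (up0 : bool) : seq R := [seq b i | i <- (iota 0 n)%N & odd i == up0].

Definition troughs b n (up0 : bool) : seq R := peaks b n (~~ up0).

Lemma mem_peaks b n up0 x :
  x \in peaks b n up0 <-> exists2 i, (i < n)%N & odd i = up0 /\ x = b i.
Proof.
split.
  by case/mapP => i; rewrite mem_filter mem_iota => /andP[/eqP oi /andP[_ ni]] ->; exists i.
by case=> i ni [oi ->]; apply/mapP; exists i; rewrite // mem_filter mem_iota oi eqxx ni.
Qed.

Lemma peaks_uniq b n up0 : (forall i, (i < n)%N -> b i < b i.+1) -> uniq (peaks b n up0).
Proof.
move=> hb; rewrite map_inj_in_uniq ?filter_uniq ?iota_uniq // => i j.
rewrite !mem_filter !mem_iota /= => /andP[_ ni] /andP[_ nj] bij.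
have neq k l : (k < l)%N -> (l < n)%N -> b k != b l.
  by move=> kl ln; rewrite lt_eqF // (incr_seq_lt hb) // kl ltnW.
case: (ltngtP i j) => // h.
  by have /negP[] := neq i j h nj; rewrite bij.
by have /negP[] := neq j i h ni; rewrite bij.
Qed.

Lemma local_max_T_zigzag f b n up0 : ~~ odd n -> b 0%N = 0 -> b n = 1 ->
  (forall y, f (y + 1) = f y) -> zigzag f b n up0 ->
  forall x, local_max_T f x <-> x \in peaks b n up0.
Proof.
move=> ev b0 bn fper [hb hm] x; rewrite mem_peaks; split.
  move=> [/andP[x0 x1] lm].
  have xb : b 0%N <= x < b n by rewrite b0 bn x0 x1.
  have [i ni xi] := exists_piece hb xb.
  have [/negbFE/eqP oi xE] := is_local_max_strict_mono_on (hm i ni) xi lm.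
  by exists i.
move=> [i ni [oi ->]]; split.
  apply/andP; split.
    by have := incr_seq_le hb (i := 0) (j := i); rewrite b0; apply; rewrite leq0n; exact: ltnW.
  by have := incr_seq_lt hb (i := i) (j := n); rewrite bn; apply; rewrite ni leqnn.
have dec : strict_mono_on false f (b i) (b i.+1) by move: (hm i ni); rewrite oi eqxx.
case: i ni oi dec => [|i] ni oi dec.
  have n1 : (n.-1 < n)%N by rewrite prednK ?leqnn.
  have on1 : odd n.-1 by move: ev; rewrite -{1}(prednK ni) /= negbK.
  have inc : strict_mono_on true f (b n.-1 - 1) (b 0%N).
    have := strict_mono_on_shift fper (hm n.-1 n1).
    by rewrite prednK // bn subrr b0 on1 -oi.
  apply: is_local_max_between inc dec; rewrite (hb 0%N ni) andbT b0 subr_lt0.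
  by have := hb n.-1 n1; rewrite prednK // bn.
have inc : strict_mono_on true f (b i) (b i.+1).
  by move: (hm i (ltnW ni)); rewrite -oi /=; case: (odd i).
by apply: is_local_max_between inc dec; rewrite !hb ?(ltnW ni).
Qed.

End Zigzag.

Section ZigzagVariation.
Variable R : realType.
Implicit Types (f : R -> R) (b : nat -> R).

Lemma sum_abs_zigzag (F : nat -> R) n up0 : ~~ odd n -> F n = F 0 ->
  (forall i, (i < n)%N -> if odd i != up0 then F i < F i.+1 else F i.+1 < F i) ->
  \sum_(0 <= i < n) `|F i.+1 - F i| =
    2 * (\sum_(0 <= i < n | odd i == up0) F i - \sum_(0 <= i < n | odd i != up0) F i).
Proof.
(* With e i = +-1 the direction of the i-th step, |F i.+1 - F i| = e i * (F i.+1 - F i)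
   and e i.+1 = - e i, so the sum telescopes to -2 \sum e i * F i since n is even and F n = F 0. *)
move=> ev Fn hF.
pose e i : R := if odd i != up0 then 1 else -1.
have eS i : e i.+1 = - e i by rewrite /e /=; case: (odd i); case: (up0); rewrite ?opprK.
have en : e n * F n = e 0 * F 0 by rewrite Fn /e (negbTE ev).
have abs i : (0 <= i < n)%N -> `|F i.+1 - F i| = e i * (F i.+1 - F i).
  move=> /andP[_ ni]; have := hF i ni; rewrite /e; case: (_ != _) => h.
    by rewrite mul1r gtr0_norm // subr_gt0.
  by rewrite mulN1r ltr0_norm ?subr_lt0.
have shift : \sum_(0 <= i < n) e i * F i.+1 = - \sum_(0 <= i < n) e i * F i.
  have recl : \sum_(0 <= i < n.+1) e i * F i =
      e 0 * F 0 + \sum_(0 <= i < n) e i.+1 * F i.+1 := big_nat_recl _ _ _ (leq0n n).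
  have recr : \sum_(0 <= i < n.+1) e i * F i =
      \sum_(0 <= i < n) e i * F i + e n * F n := big_nat_recr _ _ _ (leq0n n).
  have -> : \sum_(0 <= i < n) e i * F i = \sum_(0 <= i < n) e i.+1 * F i.+1 by lra.
  by rewrite -sumrN; apply: eq_bigr => i _; rewrite eS mulNr opprK.
have split_e : \sum_(0 <= i < n) e i * F i =
    \sum_(0 <= i < n | odd i != up0) F i - \sum_(0 <= i < n | odd i == up0) F i.
  rewrite (bigID (fun i => odd i == up0)) /= addrC -sumrN.
  congr (_ + _); apply: eq_bigr => i oi; rewrite /e.
    by rewrite oi mul1r.
  by rewrite (eqP oi) eqxx mulN1r.
rewrite (eq_big_nat _ _ abs); under eq_bigr do rewrite mulrBr.
by rewrite big_split /= sumrN shift split_e; ring.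
Qed.

Lemma total_variation_zigzag f b n up0 : ~~ odd n -> b 0%N = 0 -> b n = 1 ->
  f 1 = f 0 -> zigzag f b n up0 ->
  total_variation 0 1 f =
    (2 * (\sum_(x <- peaks b n up0) f x - \sum_(x <- troughs b n up0) f x))%:E.
Proof.
move=> ev b0 bn f10 [hb hm].
have -> : total_variation 0 1 f = total_variation (b 0%N) (b n) f by rewrite b0 bn.
rewrite (total_variation_pieces hb hm) /troughs /peaks !big_map !big_filter.
rewrite (sum_abs_zigzag (F := f \o b) (up0 := up0) ev) /=; last 2 first.
- by rewrite b0 bn.
- by move=> i ni; have := hm i ni (b i) (b i.+1) (lexx _) (hb i ni) (lexx _).
rewrite /index_iota subn0; congr ((2 * (_ - _))%:E).
by apply: eq_bigl => i; case: (odd i); case: (up0).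
Qed.

Lemma sum_gt0_of_mem (s : seq R) x f : x \in s -> (forall y, 0 < f y) ->
  0 < \sum_(y <- s) f y.
Proof.
move=> xs fpos; rewrite (big_rem x) //=.
by rewrite ltr_pwDl ?sumr_ge0 // => y _; apply/ltW.
Qed.

Lemma total_variation_zigzag_lt f b n up0 : (0 < n)%N -> ~~ odd n ->
  b 0%N = 0 -> b n = 1 -> f 1 = f 0 -> (forall x, 0 < f x) -> zigzag f b n up0 ->
  (total_variation 0 1 f < (2 * \sum_(x <- peaks b n up0) f x)%:E)%E.
Proof.
move=> n0 ev b0 bn f10 fpos zf.
rewrite (total_variation_zigzag ev b0 bn f10 zf) lte_fin ltr_pM2l // gtrBl.
apply: (sum_gt0_of_mem (x := b (~~ up0))) => //; apply/mem_peaks.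
exists (~~ up0); last by case: (up0).
by case: (up0) => //=; move: n0 ev; case: (n) => [|[|]].
Qed.

Lemma zigzag_powR f b n up0 t : 0 < t -> (forall x, 0 < f x) ->
  zigzag f b n up0 -> zigzag (fun x => powR (f x) t) b n up0.
Proof.
move=> t0 fpos [hb hm]; split => // i ni x y bx xy yb.
have := hm i ni x y bx xy yb.
by case: (_ != _) => h; apply: gt0_ltr_powR; rewrite ?nnegrE ?ltW.
Qed.

End ZigzagVariation.

Section CosReparametrization.
Variable R : realType.

Definition arc (t : R) : R := acos t / (2 * pi).

Lemma pi2_gt0 : 0 < 2 * pi :> R.
Proof. by rewrite mulr_gt0 // pi_gt0. Qed.

Lemma cos_2pi_arc t : -1 <= t <= 1 -> cos (2 * pi * arc t) = t.
Proof.
move=> t1; rewrite /arc mulrC divfK ?gt_eqF ?pi2_gt0 //.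
by rewrite acosK // in_itv.
Qed.

Lemma arc_itv t : -1 <= t <= 1 -> 0 <= arc t <= 2^-1.
Proof.
move=> t1; have pi0 := pi_gt0 R; rewrite /arc.
rewrite divr_ge0 ?acos_ge0 ?(ltW pi2_gt0) //= ler_pdivrMr ?pi2_gt0 //.
by rewrite mulrA mulVf // mul1r acos_lepi.
Qed.

Lemma arc1 : arc 1 = 0.
Proof. by rewrite /arc acos1 mul0r. Qed.

Lemma arcN1 : arc (-1) = 2^-1.
Proof.
by rewrite /arc acosN1 invfM mulrCA divff ?mulr1 // gt_eqF // pi_gt0.
Qed.

Lemma arc_lt t t' : -1 <= t -> t < t' -> t' <= 1 -> arc t' < arc t.
Proof.
move=> t1 tt' t'1.
have ti : t \in `[(-1), 1] by rewrite in_itv /= t1 (le_trans (ltW tt')).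
have t'i : t' \in `[(-1), 1] by rewrite in_itv /= t'1 (le_trans _ (ltW tt')).
rewrite /arc ltr_pM2r ?invr_gt0 ?pi2_gt0 //.
move: tt'; rewrite -{1}(acosK ti) -{1}(acosK t'i) ltr_cos // in_itv /=.
- by rewrite acos_ge0 ?acos_lepi //; move: ti; rewrite in_itv.
- by rewrite acos_ge0 ?acos_lepi //; move: t'i; rewrite in_itv.
Qed.

Lemma cos_2pi_1m x : cos (2 * pi * (1 - x)) = cos (2 * pi * x) :> R.
Proof.
have -> : 2 * pi * (1 - x) = - (2 * pi * x) + pi *+ 2 by rewrite mulr2n; ring.
by rewrite cosD2pi cosN.
Qed.

Lemma cos_2pi_decr : strict_mono_on false (fun x : R => cos (2 * pi * x)) 0 2^-1.
Proof.
move=> x y x0 xy yh; have pi0 := pi_gt0 R.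
have x2 : 0 <= 2 * pi * x <= pi by apply/andP; split; nra.
have y2 : 0 <= 2 * pi * y <= pi by apply/andP; split; nra.
by rewrite ltr_cos ?in_itv //= ltr_pM2l ?pi2_gt0.
Qed.

Lemma cos_2pi_incr : strict_mono_on true (fun x : R => cos (2 * pi * x)) 2^-1 1.
Proof.
move=> x y hx xy y1; rewrite -cos_2pi_1m -[X in _ < X]cos_2pi_1m.
by apply: cos_2pi_decr; lra.
Qed.

Definition fold_index (n i : nat) : nat := if (i <= n)%N then (n - i)%N else (i - n)%N.

(* x |-> cos (2 pi x) decreases from 1 to -1 on [0, 1/2] and increases back on [1/2, 1]; the
   breakpoints are the preimages of rho n, ..., rho 0 in the first half and of rho 1, ..., rho n
   in the second. *)
Definition cos_breaks (rho : nat -> R) (n i : nat) : R :=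
  if (i <= n)%N then arc (rho (n - i)%N) else 1 - arc (rho (i - n)%N).

End CosReparametrization.

Section CosBreakpoints.
Variable R : realType.
Variables (n : nat) (rho : nat -> R).
Hypotheses (n0 : (0 < n)%N) (rho0 : rho 0%N = -1) (rhon : rho n = 1)
  (rho_incr : forall j, (j < n)%N -> rho j < rho j.+1).
Let b := cos_breaks rho n.

Lemma rho_itv j : (j <= n)%N -> -1 <= rho j <= 1.
Proof.
move=> jn; rewrite -rho0 -rhon.
by rewrite !(incr_seq_le rho_incr) ?leq0n ?jn ?leqnn.
Qed.

Lemma cos_breaksL i : (i <= n)%N -> b i = arc (rho (n - i)%N).
Proof. by rewrite /b /cos_breaks => ->. Qed.

Lemma cos_breaksR i : (n <= i)%N -> b i = 1 - arc (rho (i - n)%N).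
Proof.
rewrite /b /cos_breaks leq_eqVlt => /orP[/eqP <- | ni]; last by rewrite leqNgt ni.
by rewrite leqnn !subnn rho0 arcN1; lra.
Qed.

Lemma cos_breaks0 : b 0%N = 0.
Proof. by rewrite cos_breaksL // subn0 rhon arc1. Qed.

Lemma cos_breaks_double : b n.*2 = 1.
Proof. by rewrite cos_breaksR -?addnn ?leq_addr // addnK rhon arc1 subr0. Qed.

Lemma cos_cos_breaks i : (i <= n.*2)%N ->
  cos (2 * pi * b i) = rho (fold_index n i).
Proof.
rewrite /fold_index => i2n; case: leqP => ni.
  by rewrite cos_breaksL // cos_2pi_arc // rho_itv // leq_subr.
rewrite cos_breaksR 1?ltnW // cos_2pi_1m cos_2pi_arc // rho_itv //.
by rewrite leq_subLR addnn.
Qed.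

Lemma cos_breaks_incr i : (i < n.*2)%N -> b i < b i.+1.
Proof.
move=> i2n; have [ni | ni] := ltnP i n.
  rewrite (cos_breaksL (ltnW ni)) (cos_breaksL ni).
  have [lo _] := andP (rho_itv (leq_subr i.+1 n)).
  have [_ hi] := andP (rho_itv (leq_subr i n)).
  by apply: arc_lt => //; rewrite -(subnSK ni) rho_incr //; lia.
rewrite (cos_breaksR ni) (cos_breaksR (leqW ni)) ltrD2l ltrN2.
have ni' : (i - n < n)%N by rewrite -addnn in i2n; lia.
have [lo _] := andP (rho_itv (ltnW ni')).
have [_ hi] := andP (rho_itv ni').
by apply: arc_lt => //; rewrite subSn // rho_incr.
Qed.

Lemma cos_breaks_pieceL (g : R -> R) d i : (i < n)%N ->
  strict_mono_on d g (rho (n - i.+1)%N) (rho (n - i)%N) ->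
  strict_mono_on (~~ d) (fun x => g (cos (2 * pi * x))) (b i) (b i.+1).
Proof.
move=> ni mg.
have [bi0 _] := andP (arc_itv (rho_itv (leq_subr i n))).
have [_ bi1] := andP (arc_itv (rho_itv (leq_subr i.+1 n))).
have bi0' : 0 <= b i by rewrite cos_breaksL // ltnW.
have bi1' : b i.+1 <= 2^-1 by rewrite cos_breaksL.
have mc := strict_mono_on_sub (@cos_2pi_decr R) bi0' bi1'.
have e0 : cos (2 * pi * b i) = rho (n - i)%N.
  by rewrite cos_cos_breaks /fold_index; [rewrite (ltnW ni) | lia].
have e1 : cos (2 * pi * b i.+1) = rho (n - i.+1)%N.
  by rewrite cos_cos_breaks /fold_index; [rewrite ni | lia].
apply: (strict_mono_on_comp mc mg) => x /andP[bx xb]; rewrite -e0 -e1.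
by rewrite (strict_mono_on_le mc bx xb (lexx _)) (strict_mono_on_le mc (lexx _) bx xb).
Qed.

Lemma cos_breaks_pieceR (g : R -> R) d i : (n <= i < n.*2)%N ->
  strict_mono_on d g (rho (i - n)%N) (rho (i - n).+1) ->
  strict_mono_on d (fun x => g (cos (2 * pi * x))) (b i) (b i.+1).
Proof.
move=> /andP[ni i2n] mg.
have [_ bi0] := andP (arc_itv (rho_itv (j := (i - n)%N) ltac:(lia))).
have [bi1 _] := andP (arc_itv (rho_itv (j := (i.+1 - n)%N) ltac:(lia))).
have bi0' : 2^-1 <= b i by rewrite cos_breaksR //; lra.
have bi1' : b i.+1 <= 1 by rewrite cos_breaksR 1?leqW //; lra.
have mc := strict_mono_on_sub (@cos_2pi_incr R) bi0' bi1'.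
have e0 : cos (2 * pi * b i) = rho (i - n)%N.
  rewrite cos_cos_breaks /fold_index; last lia.
  by case: leqP => // ?; have -> : i = n by lia.
have e1 : cos (2 * pi * b i.+1) = rho (i - n).+1.
  by rewrite cos_cos_breaks /fold_index; [rewrite ltnNge ni /= subSn | lia].
apply: (strict_mono_on_comp mc mg) => x /andP[bx xb]; rewrite -e0 -e1.
by rewrite (strict_mono_on_le mc bx xb (lexx _)) (strict_mono_on_le mc (lexx _) bx xb).
Qed.

Lemma cos_breaks_pieces (g : R -> R) (dir : nat -> bool) :
  (forall j, (j < n)%N -> strict_mono_on (dir j) g (rho j) (rho j.+1)) ->
  forall i, (i < n.*2)%N ->
    strict_mono_on (if (i < n)%N then ~~ dir (n - i.+1)%N else dir (i - n)%N)
      (fun x => g (cos (2 * pi * x))) (b i) (b i.+1).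
Proof.
move=> hg i i2n; have [ni | ni] := ltnP i n.
  by apply: cos_breaks_pieceL => //; rewrite -(subnSK ni); apply: hg; lia.
by apply: cos_breaks_pieceR; [rewrite ni | apply: hg; lia].
Qed.

End CosBreakpoints.

Section CriticalPoints.
Variable R : realType.

Lemma odd_predn_neq j (up0 : bool) : (0 < j)%N -> (odd j.-1 != up0) = ~~ (odd j != up0).
Proof. by case: j => //= j _; case: (odd j); case: up0. Qed.

Variables (n : nat) (up0 : bool) (f f' f'' : R -> R) (A B : nat -> R).
Hypotheses (df : forall x, is_derive x (1:R) f (f' x))
  (df' : forall x, is_derive x (1:R) f' (f'' x))
  (AB : forall j, (0 < j < n)%N -> A j < B j) (BA : forall j, (j < n)%N -> B j < A j.+1)
  (gap : forall j, (j < n)%N -> forall c, B j <= c <= A j.+1 -> has_sign (odd j != up0) (f' c))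
  (box : forall j, (0 < j < n)%N ->
     forall c, A j <= c <= B j -> has_sign (odd j != up0) (f'' c)).

(* On the box [A j, B j], f' is strictly monotone since f'' has a sign there, and it has opposite
   signs at the ends because these lie on the gaps next to the box. *)
Lemma box_root j : (0 < j < n)%N -> exists r, [/\ A j < r < B j,
    (forall x, A j <= x < r -> has_sign (~~ (odd j != up0)) (f' x))
  & (forall x, r < x <= B j -> has_sign (odd j != up0) (f' x))].
Proof.
move=> /andP[j0 jn]; set d := odd j != up0.
have sA : has_sign (~~ d) (f' (A j)).
  have j1n : (j.-1 < n)%N by rewrite (leq_ltn_trans (leq_pred j)).
  have := @gap j.-1 j1n (A j); rewrite prednK // odd_predn_neq //; apply.
  by rewrite lexx andbT; have := @BA j.-1 j1n; rewrite prednK // => /ltW.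
have sB : has_sign (~~ ~~ d) (f' (B j)).
  by rewrite negbK; apply: gap => //; rewrite lexx ltW // BA.
have s'' x : A j <= x <= B j -> has_sign (~~ ~~ d) (f'' x).
  by rewrite negbK; apply: box; rewrite j0.
have [r [rAB sl sr]] := sign_change_root df' s'' sA sB (@AB j ltac:(by rewrite j0)).
by exists r; split => // x /sr; rewrite negbK.
Qed.

Lemma critical_points : (0 < n)%N ->
  exists rho : nat -> R, [/\ rho 0%N = B 0%N, rho n = A n,
    (forall j, (0 < j < n)%N -> A j < rho j < B j) & zigzag f rho n up0].
Proof.
move=> n0.
have root j : exists r, (0 < j < n)%N -> [/\ A j < r < B j,
    (forall x, A j <= x < r -> has_sign (~~ (odd j != up0)) (f' x))
  & (forall x, r < x <= B j -> has_sign (odd j != up0) (f' x))].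
  by have [/box_root[r]|_] := boolP (0 < j < n)%N; [exists r | exists 0].
have [r hr] := choice root.
pose rho j := if j == 0%N then B 0%N else if j == n then A n else r j.
have rho_in j : (0 < j < n)%N -> rho j = r j.
  by move=> /andP[j0 jn]; rewrite /rho gtn_eqF // ltn_eqF.
have rhoB j : (j < n)%N -> rho j <= B j.
  case: j => [|j] jn; first by rewrite /rho eqxx.
  by rewrite rho_in ?jn //; case: (hr j.+1 ltac:(by rewrite jn)) => /andP[_ /ltW].
have Arho j : (0 < j <= n)%N -> A j <= rho j.
  move=> /andP[j0]; rewrite leq_eqVlt => /orP[/eqP -> | jn].
    by rewrite /rho gtn_eqF // eqxx.
  by rewrite rho_in ?j0 //; case: (hr j ltac:(by rewrite j0)) => /andP[/ltW].
have rho_lt j : (j < n)%N -> rho j < rho j.+1.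
  by move=> jn; rewrite (le_lt_trans (rhoB j jn)) // (lt_le_trans (@BA j jn)) ?Arho.
exists rho; split.
- by rewrite /rho eqxx.
- by rewrite /rho gtn_eqF // eqxx.
- by move=> j jj; rewrite rho_in //; case: (hr j jj).
split => // j jn; apply: (strict_mono_on_derive df) => x /andP[lx xu].
have [xB | Bx] := leP x (B j).
  case: j jn lx xu xB => [|j] jn lx xu xB.
    by move: (lt_le_trans lx xB); rewrite /rho eqxx ltxx.
  have jj : (0 < j.+1 < n)%N by rewrite jn.
  by case: (hr j.+1 jj) => _ _; apply; rewrite -rho_in // lx xB.
have [xA | Ax] := leP x (A j.+1); first by apply: gap => //; rewrite (ltW Bx) xA.
have jj : (0 < j.+1 < n)%N.
  rewrite /= ltn_neqAle jn andbT; apply/eqP => e.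
  by move: (lt_trans Ax xu); rewrite /rho e eqxx gtn_eqF // ltxx.
have e := odd_predn_neq up0 (ltn0Sn j); rewrite /= in e; rewrite e.
by case: (hr j.+1 jj) => _ + _; apply; rewrite (ltW Ax) -rho_in.
Qed.

End CriticalPoints.

Section ChebyshevForm.
Variable R : realType.

Definition cheb6 (c : R) := 32 * c ^+ 6 - 48 * c ^+ 4 + 18 * c ^+ 2 - 1.
Definition cheb7 (c : R) := 64 * c ^+ 7 - 112 * c ^+ 5 + 56 * c ^+ 3 - 7 * c.

Definition Gc (s : bool) (c : R) := 3 + 2 * (c + sgn s * (cheb6 c + cheb7 c)).
Arguments Gc : simpl never.
Definition Gc' (s : bool) (c : R) := 2 + 2 * sgn s *
  (448 * c ^+ 6 + 192 * c ^+ 5 - 560 * c ^+ 4 - 192 * c ^+ 3 + 168 * c ^+ 2 + 36 * c - 7).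
Definition Gc'' (s : bool) (c : R) := 2 * sgn s *
  (2688 * c ^+ 5 + 960 * c ^+ 4 - 2240 * c ^+ 3 - 576 * c ^+ 2 + 336 * c + 36).

Lemma is_derive_Gc s x : is_derive x (1:R) (Gc s) (Gc' s x).
Proof.
rewrite /Gc /Gc' /cheb6 /cheb7.
by apply: trigger_derive; rewrite /GRing.scale /=; ring.
Qed.

Lemma is_derive_Gc' s x : is_derive x (1:R) (Gc' s) (Gc'' s x).
Proof. by rewrite /Gc' /Gc''; apply: trigger_derive; rewrite /GRing.scale /=; ring. Qed.

Lemma cos_mulSS n (t : R) :
  cos (n.+2%:R * t) = 2 * cos (n.+1%:R * t) * cos t - cos (n%:R * t).
Proof.
have -> : n.+2%:R * t = n.+1%:R * t + t by rewrite -[n.+2]addn1 natrD; ring.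
have -> : n%:R * t = n.+1%:R * t - t by rewrite -[n.+1]addn1 natrD; ring.
by rewrite cosD cosB; ring.
Qed.

Lemma cos6 (t : R) : cos (6 * t) = cheb6 (cos t).
Proof. by rewrite !cos_mulSS mulr1n mul1r mulr0n mul0r cos0 /cheb6; ring. Qed.

Lemma cos7 (t : R) : cos (7 * t) = cheb7 (cos t).
Proof. by rewrite !cos_mulSS mulr1n mul1r mulr0n mul0r cos0 /cheb7; ring. Qed.

Lemma GpmE s (x : R) : Gpm s x = Gc s (cos (2 * pi * x)).
Proof.
rewrite /Gpm /Gc; have -> : 12 * pi * x = 6 * (2 * pi * x) by ring.
have -> : 14 * pi * x = 7 * (2 * pi * x) by ring.
by rewrite cos6 cos7; ring.
Qed.

Lemma Gpm_periodic s (x : R) : Gpm s (x + 1) = Gpm s x.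
Proof.
rewrite !GpmE; have -> : 2 * pi * (x + 1) = 2 * pi * x + pi *+ 2 by rewrite mulr2n; ring.
by rewrite cosD2pi.
Qed.

End ChebyshevForm.

Section BernsteinCertificates.
Variable R : realType.

(* Large constants are written as binary [positive]s: MathComp numerals are unary [nat]s. *)
Fixpoint Rpos (p : positive) : R :=
  match p with xH => 1 | xO q => 2 * Rpos q | xI q => 2 * Rpos q + 1 end.

(* bernstein u v [:: b_0; ...; b_d] = \sum_k b_k u^k v^(d - k); with u = d c - lo and
   v = hi - d c this is a polynomial in c written in the Bernstein basis of [lo/d, hi/d]. *)
Fixpoint bernstein (u v : R) (l : seq R) : R :=
  if l is x :: l' then x * v ^+ size l' + u * bernstein u v l' else 0.

Lemma Rpos_gt0 p : 0 < Rpos p.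
Proof. by elim: p => //= p IH; rewrite ?ltr_wpDr ?mulr_gt0. Qed.

Lemma bernstein_gt0 (u v : R) (cs : seq positive) : 0 <= u -> 0 <= v -> 0 < u + v ->
  (0 < size cs)%N -> 0 < bernstein u v (map Rpos cs).
Proof.
move=> u0 v0 uv; elim: cs => [|p [|q cs] IH] //= _.
  by rewrite expr0 mulr1 mulr0 addr0 Rpos_gt0.
have [u0' | un0] := eqVneq u 0.
  have vp : 0 < v by move: uv; rewrite u0' add0r.
  by rewrite u0' mul0r addr0 mulr_gt0 ?Rpos_gt0 ?exprn_gt0.
rewrite ltr_wpDl ?mulr_ge0 ?exprn_ge0 ?(ltW (Rpos_gt0 _)) //.
by rewrite mulr_gt0 ?IH // lt_def un0.
Qed.

Lemma bernstein_certificate (K : positive) (u v : R) (cs : seq positive) p :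
  0 <= u -> 0 <= v -> 0 < u + v -> (0 < size cs)%N ->
  Rpos K * p = bernstein u v (map Rpos cs) -> 0 < p.
Proof.
move=> u0 v0 uv cs0 e.
by have := bernstein_gt0 u0 v0 uv cs0; rewrite -e pmulr_rgt0 // Rpos_gt0.
Qed.

End BernsteinCertificates.

(* [bernstein c K d lo hi bs] proves 0 < p, or p < 0, for lo <= d c <= hi by checking
   K p = bernstein (d c - lo) (hi - d c) bs, resp. with -p, by [ring]. *)
Tactic Notation "bernstein" constr(c) constr(K) uconstr(d) uconstr(lo) uconstr(hi)
    constr(cs) :=
  rewrite -?oppr_gt0; lazymatch goal with |- is_true (Order.lt _ ?p) =>
    have := @bernstein_certificate _ K (d * c - lo) (hi - d * c) cs p;
    apply; [lra | lra | lra | by [] | rewrite /= /Gc /Gc' /Gc'' /cheb6 /cheb7 /sgn /=; ring]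
  end.

Section Certificates.
Variable R : realType.

(* For 0 < j < 7 the box [box_lo s j, box_hi s j] isolates the j-th critical point of Gc s;
   between box_hi s j and box_lo s j.+1 (with box_hi s 0 = -1, box_lo s 7 = 1) Gc' s has a sign. *)
Definition box_lo (s : bool) (j : nat) : R := nth 0 (if s
  then [:: 0; -485/512; -381/512; -165/512; 117/1024; 595/1024; 113/128; 1]
  else [:: 0; -981/1024; -183/256; -183/512; 37/256; 577/1024; 455/512; 1]) j.

Definition box_hi (s : bool) (j : nat) : R := nth 0 (if s
  then [:: -1; -121/128; -95/128; -41/128; 119/1024; 597/1024; 453/512]
  else [:: -1; -979/1024; -365/512; -91/256; 75/512; 579/1024; 57/64]) j.

Definition peak_bound (s : bool) (j : nat) : R := nth 0 (if s
  then [:: 0; 7/4; 0; 47/10; 0; 31/4]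
  else [:: 0; 0; 31/10; 0; 127/20; 0; 35/4]) j.

Lemma Gc'_gap_sign s j (c : R) : (j < 7)%N -> box_hi s j <= c <= box_lo s j.+1 ->
  has_sign (odd j != s) (Gc' s c).
Proof.
rewrite /has_sign /box_lo /box_hi; case: s; do 7?[case: j => [|j]] => //= _ /andP[? ?].
- bernstein c 54524586559252979515392%positive 512 (-512) (-485)
    [:: 3940649673949184; 18240897904803840; 33804287427477504; 31415103152717824;
      14730138100236288; 2871238452930048; 52167020732159]%positive.
- bernstein c 168047921178402793573056512%positive 512 (-484) (-381)
    [:: 41004412997632; 9680996220614656; 31223641121550080; 37905426261973248;
      20477457393535344; 4192096646306232; 28057834735377]%positive.
- bernstein c 13900824351538096898048000000%positive 512 (-380) (-165)
    [:: 11011144577024; 8466122883774464; 42103435127292160; 60317076642228480;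
      34087007670671760; 6745572804191544; 18717471137919]%positive.
- bernstein c 69943898649439614122590208000000%positive 1024 (-328) 117
    [:: 775692478578688; 443559775895093248; 2153756461076049920; 3562130899801896960;
      2302195410064643520; 506666028992851728; 1271812371710433]%positive.
- bernstein c 104768683455814308806862351368192%positive 1024 119 595
    [:: 975270648560279; 541650613753908658; 2926883599311242033; 5564469690773932700;
      4233136443015954377; 975197396199321490; 1744010994022991]%positive.
- bernstein c 7540845155890300947743016747008%positive 1024 597 904
    [:: 2320254459694113; 639419576872944240; 3410078396840886720; 6840962508321540096;
      6089431270886862848; 2036356913475026944; 9048662540025856]%positive.
- bernstein c 5936382362121758465589248%positive 512 453 512
    [:: 63007395033279; 12593382656057856; 71275934508711936; 162813979423408128;
      186050501429690368; 106188633987350528; 24206847997116416]%positive.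
- bernstein c 56937776543900044894404608%positive 1024 (-1024) (-981)
    [:: 216172782113783808; 1021683796715503616; 1935203274487496704;
      1840771913756966912; 885633600699236352; 178376396253563904;
      3822493675058911]%positive.
- bernstein c 2045368153848171969677694599168%positive 1024 (-979) (-732)
    [:: 3297375350968497; 885576068449149880; 2718150503662730096; 3125765697669863680;
      1590237152885001984; 302661040338057216; 728204185604096]%positive.
- bernstein c 5114911503774019750222364672%positive 512 (-365) (-183)
    [:: 26269314605007; 6992412559634798; 31404639095654473; 45276609224170340;
      26688008265458097; 5605770519436110; 10281052438039]%positive.
- bernstein c 9671406556917033397649408%positive 256 (-91) 37
    [:: 315872498817; 124018639798790; 649174393476751; 1118513244856340;
      710269426678159; 148433369669126; 419236092801]%positive.
- bernstein c 54595521699288901192747411570688%positive 1024 150 577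
    [:: 619036486510528; 502814757407133120; 2569491771474250128; 4673421862251396896;
      3472295692997245060; 824970075670357916; 1229438033263239]%positive.
- bernstein c 11845618260074422911042848817152%positive 1024 579 910
    [:: 2613848526767249; 654015384358933980; 3603450135970163292; 7454387642858486560;
      6824257616903464688; 2335933185224325568; 4808716348072512]%positive.
- bernstein c 9023189417984%positive 64 57 64
    [:: 79246417; 7290246336; 39986457600; 89765445632; 101214846976; 57109643264;
      12884901888]%positive.
Qed.

Lemma Gc''_box_sign s j (c : R) : (0 < j < 7)%N -> box_lo s j <= c <= box_hi s j ->
  has_sign (odd j != s) (Gc'' s c).
Proof.
rewrite /has_sign /box_lo /box_hi; case: s; do 7?[case: j => [|j]] => //= _ /andP[? ?].
- bernstein c 137438953472%positive 512 (-485) (-484)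
    [:: 47374746824761; 235287381385028; 467414524512928; 464266716116096;
      230565650156800; 45800823993344]%positive.
- bernstein c 137438953472%positive 512 (-381) (-380)
    [:: 19532765232495; 97669685180004; 195347458128480; 195351935674496;
      97676411484928; 19535013991424]%positive.
- bernstein c 137438953472%positive 512 (-165) (-164)
    [:: 15426204598521; 77117179710468; 154205322096288; 154174935415936;
      77071600405760; 15411011974144]%positive.
- bernstein c 140737488355328%positive 1024 117 119
    [:: 560713657036617; 2805710010210975; 5615662248123978; 5619863158423054;
      2812011328454429; 562814064981667]%positive.
- bernstein c 140737488355328%positive 1024 595 597
    [:: 1013375346885697; 5072320297498451; 10155435872477866; 10166138707111302;
      5088374251231845; 1018726465984983]%positive.
- bernstein c 137438953472%positive 512 452 453
    [:: 100878712247296; 507017344617728; 1019299531040896; 1024581693148320;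
      514940610459684; 103519815981849]%positive.
- bernstein c 140737488355328%positive 1024 (-981) (-979)
    [:: 1807458537246633; 8982031437388059; 17853959328875898; 17744273505890390;
      8817502089997357; 1752615012840767]%positive.
- bernstein c 137438953472%positive 512 (-366) (-365)
    [:: 18869674546080; 94258370626224; 188333960649360; 188148421573016;
      93980070937858; 18776913934079]%positive.
- bernstein c 137438953472%positive 512 (-183) (-182)
    [:: 15231000562659; 76190826643302; 152451901773624; 152520751453360;
      76294101361136; 15265425600736]%positive.
- bernstein c 137438953472%positive 512 74 75
    [:: 18239744139040; 91223729367344; 182496064933840; 182543257686936;
      91294517358138; 18263339376759]%positive.
- bernstein c 140737488355328%positive 1024 577 579
    [:: 957369376429483; 4793802584365445; 9601440226972702; 9615198384696666;
      4814439542697351; 964248177036753]%positive.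
- bernstein c 137438953472%positive 512 455 456
    [:: 108906763932019; 547262480841992; 1099999969197952; 1105492707738624;
      555501611642880; 111653156192256]%positive.
Qed.

Lemma Gc_lt_peak_bound s j (c : R) : (0 < j < 7)%N -> odd j == s ->
  box_lo s j <= c <= box_hi s j -> Gc s c < peak_bound s j.
Proof.
rewrite /box_lo /box_hi /peak_bound; case: s; do 7?[case: j => [|j]] => //= _ _ /andP[? ?].
- suff : 0 < 7 - 4 * Gc true c by lra.
  bernstein c 18014398509481984%positive 512 (-485) (-484)
    [:: 6531335589552717; 45667182106136860; 136892420003038864; 228050585273240256;
      228025039628834560; 136846123062268928; 45641111825756160;
      6526016605536256]%positive.
- suff : 0 < 47 - 10 * Gc true c by lra.
  bernstein c 36028797018963968%positive 512 (-165) (-164)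
    [:: 26626731955618241; 186293536333638092; 558676977956838096; 930917440154120640;
      930835088148591360; 558528729153545216; 186211159006113792;
      26610251425857536]%positive.
- suff : 0 < 31 - 4 * Gc true c by lra.
  bernstein c 295147905179352825856%positive 1024 595 597
    [:: 464262717135021509; 3246350997957104581; 9732642429294718585;
      16217149534926870313; 16219998644944194895; 9737775108459756207;
      3249207243117993651; 464835393148197411]%positive.
- suff : 0 < 31 - 10 * Gc false c by lra.
  bernstein c 36028797018963968%positive 512 (-366) (-365)
    [:: 34783520264998528; 243427750902989376; 730206928225697568; 1217041436855088720;
      1217228271634555960; 730543138059200428; 243614431069535046;
      34820825377508583]%positive.
- suff : 0 < 127 - 20 * Gc false c by lra.
  bernstein c 18014398509481984%positive 512 74 75
    [:: 26082486133186688; 182443247382610496; 547018474219437728; 911330716700685520;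
      911116056423086360; 546632109316135788; 182228626431925966;
      26039569808204943]%positive.
- suff : 0 < 35 - 4 * Gc false c by lra.
  bernstein c 18014398509481984%positive 512 455 456
    [:: 6453656860131895; 45100461827984632; 135184883669070016; 225296390583924224;
      225467975047598080; 135494284977537024; 45272961749614592;
      6488339936968704]%positive.
Qed.

Lemma Gc_gt0 s (c : R) : -1 <= c <= 1 -> 0 < Gc s c.
Proof.
move=> /andP[? ?]; case: s.
- have [?|?] := leP c (-3/4); first by
    bernstein c 128%positive 4 (-4) (-3)
      [:: 128; 1792; 5152; 6272; 3680; 996; 110; 11]%positive.
  have [?|?] := leP c (-1/2); first by
    bernstein c 128%positive 4 (-3) (-2)
      [:: 11; 44; 600; 2760; 5232; 4832; 2176; 384]%positive.
  have [?|?] := leP c 0; first by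
    bernstein c 1%positive 2 (-1) 0
      [:: 3; 29; 106; 183; 156; 66; 13; 1]%positive.
  have [?|?] := leP c (1/4); first by
    bernstein c 128%positive 4 0 1
      [:: 128; 512; 672; 384; 528; 980; 730; 183]%positive.
  have [?|?] := leP c (1/2); first by
    bernstein c 128%positive 4 1 2
      [:: 183; 1832; 7592; 16712; 21040; 15136; 5760; 896]%positive.
  have [?|?] := leP c (3/4); first by
    bernstein c 128%positive 4 2 3
      [:: 896; 6784; 21280; 35600; 33992; 18312; 5096; 569]%positive.
  have [?|?] := leP c (7/8); first by
    bernstein c 16384%positive 8 6 7
      [:: 72832; 438592; 1092000; 1446928; 1096408; 479036; 118334; 15019]%positive.
  by
    bernstein c 16384%positive 8 7 8
      [:: 15019; 91932; 320624; 799232; 1314304; 1291264; 679936; 147456]%positive.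
- have [?|?] := leP c (-3/4); first by
    bernstein c 128%positive 4 (-4) (-3)
      [:: 128; 128; 992; 4608; 7840; 6300; 2450; 373]%positive.
  have [?|?] := leP c (-1/2); first by
    bernstein c 128%positive 4 (-3) (-2)
      [:: 373; 2772; 8232; 12600; 10768; 5152; 1280; 128]%positive.
  have [?|?] := leP c (-3/8); first by
    bernstein c 16384%positive 8 (-4) (-3)
      [:: 16384; 90112; 201728; 234752; 149952; 50880; 8280; 599]%positive.
  have [?|?] := leP c (-1/4); first by
    bernstein c 16384%positive 8 (-3) (-2)
      [:: 599; 106; 1836; 29768; 80976; 93664; 50752; 10624]%positive.
  have [?|?] := leP c 0; first by
    bernstein c 128%positive 4 (-1) 0
      [:: 83; 950; 4340; 10224; 13504; 10080; 3968; 640]%positive.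
  have [?|?] := leP c (1/2); first by
    bernstein c 1%positive 2 0 1
      [:: 5; 43; 144; 236; 195; 76; 13; 1]%positive.
  by
    bernstein c 1%positive 2 1 2
      [:: 1; 1; 4; 65; 196; 224; 91; 1]%positive.
Qed.
End Certificates.
Arguments box_lo {R}.
Arguments box_hi {R}.
Arguments peak_bound {R}.

Section TheFunctionG.
Variable R : realType.

Lemma Gc_zigzag s : exists rho : nat -> R, [/\ rho 0%N = -1, rho 7%N = 1,
  (forall j, (0 < j < 7)%N -> box_lo s j < rho j < box_hi s j) & zigzag (Gc s) rho 7%N s].
Proof.
have AB j : (0 < j < 7)%N -> box_lo s j < box_hi s j :> R.
  by case: j => [|[|[|[|[|[|[|j]]]]]]] jn; try lia; rewrite /box_lo /box_hi; case: (s) => /=; lra.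
have BA j : (j < 7)%N -> box_hi s j < box_lo s j.+1 :> R.
  by case: j => [|[|[|[|[|[|[|j]]]]]]] jn; try lia; rewrite /box_lo /box_hi; case: (s) => /=; lra.
have [rho [r0 r7 rbox zG]] := critical_points (is_derive_Gc s) (is_derive_Gc' s) AB BA
  (fun j jn c => Gc'_gap_sign jn) (fun j jn c => Gc''_box_sign jn) isT.
by exists rho; split => //; [rewrite r0 | rewrite r7]; case: (s).
Qed.

Lemma Gc_variation_bound s (rho : nat -> R) : rho 0%N = -1 -> rho 7%N = 1 ->
  (forall j, (j < 7)%N -> rho j < rho j.+1) ->
  (forall j, (0 < j < 7)%N -> box_lo s j < rho j < box_hi s j) ->
  2 * (\sum_(i <- (iota 0 14)%N | odd i == ~~ s) Gc s (rho (fold_index 7%N i))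
    - \sum_(i <- (iota 0 14)%N | odd i == s) Gc s (rho (fold_index 7%N i))) < 74.
Proof.
(* For G_+ the bound is 2 (9 - 1 + 2 (7/4 + 47/10 + 31/4)) = 72.8, and for G_- it is
   2 (1 - 1 + 2 (31/10 + 127/20 + 35/4)) = 72.8: each interior critical value occurs twice. *)
move=> r0 r7 rinc rbox.
have pos j : (j <= 7)%N -> 0 < Gc s (rho j) by move=> jn; apply/Gc_gt0/(rho_itv r0 r7 rinc jn).
have peak j : (0 < j < 7)%N -> odd j == s -> Gc s (rho j) < peak_bound s j.
  by move=> jj oj; have /andP[? ?] := rbox j jj; apply: Gc_lt_peak_bound; rewrite // !ltW.
have e0 : Gc s (rho 0%N) = 1 by rewrite r0 /Gc /cheb6 /cheb7; ring.
have e7 : Gc s (rho 7%N) = 5 + 4 * sgn s by rewrite r7 /Gc /cheb6 /cheb7; ring.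
rewrite (big_mkcond (fun i => odd i == ~~ s)) (big_mkcond (fun i => odd i == s)).
case: s pos peak e0 e7 {rbox} => pos peak e0 e7; rewrite /fold_index /= !big_cons !big_nil /=.
all: have := pos 1%N isT; have := pos 2%N isT; have := pos 3%N isT.
all: have := pos 4%N isT; have := pos 5%N isT; have := pos 6%N isT.
- have := peak 1%N isT isT; have := peak 3%N isT isT; have := peak 5%N isT isT.
  by rewrite /peak_bound /sgn /= in e7 *; lra.
- have := peak 2%N isT isT; have := peak 4%N isT isT; have := peak 6%N isT isT.
  by rewrite /peak_bound /sgn /= in e7 *; lra.
Qed.

Lemma Gpm_zigzag s : exists b : nat -> R, [/\ b 0%N = 0, b 14%N = 1,
  zigzag (Gpm s) b 14%N (~~ s) &
  2 * (\sum_(x <- peaks b 14%N (~~ s)) Gpm s x - \sum_(x <- troughs b 14%N (~~ s)) Gpm s x) < 74].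
Proof.
have [rho [r0 r7 rbox [rinc rmono]]] := Gc_zigzag s.
have GE : Gpm s = fun x : R => Gc s (cos (2 * pi * x)) by apply: funext => x; rewrite GpmE.
have dir i : (i < 14)%N -> odd i != ~~ s =
    if (i < 7)%N then ~~ (odd (7 - i.+1) != s) else odd (i - 7) != s.
  by case: i => [|[|[|[|[|[|[|[|[|[|[|[|[|[|i]]]]]]]]]]]]]] i14; try lia; case: (s).
exists (cos_breaks rho 7%N); split.
- exact: cos_breaks0 r7.
- exact: (cos_breaks_double (n := 7) r0 r7).
- split=> [i|i i14]; first exact: (cos_breaks_incr (n := 7) isT r0 r7 rinc).
  by rewrite GE dir //; exact: (cos_breaks_pieces (n := 7) isT r0 r7 rinc rmono i14).
have Gb (P : pred nat) : {in [seq i <- (iota 0 14)%N | P i], forall i,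
    Gpm s (cos_breaks rho 7%N i) = Gc s (rho (fold_index 7%N i))}.
  move=> i; rewrite mem_filter mem_iota => /andP[_ /andP[_ i14]].
  by rewrite GpmE cos_cos_breaks // ltnW.
rewrite /troughs /peaks !big_map (eq_big_seq _ (Gb _)) (eq_big_seq _ (Gb _)).
by rewrite !big_filter negbK; apply: Gc_variation_bound.
Qed.

End TheFunctionG.

Theorem corollary2 (R : realType) (s : bool) :
  (forall t : R, 0 < t ->
     exists2 Z : seq R, uniq Z /\ (forall x, x \in Z <-> local_max_T (@Gpm R s) x) &
       (total_variation 0 1 (fun x : R => powR (Gpm s x) t)
          < (2 * \sum_(z <- Z) powR (Gpm s z) t)%:E)%E)
  /\ (total_variation 0 1 (@Gpm R s) < 74%:E)%E.
Proof.
have [b [b0 b14 zG bound]] := Gpm_zigzag R s.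
have G10 : Gpm s 1 = Gpm s 0 :> R by rewrite -{1}(add0r 1) Gpm_periodic.
have Gpos x : 0 < Gpm s x :> R.
  by rewrite GpmE; apply: Gc_gt0; rewrite cos_geN1 cos_le1.
split; last by rewrite (total_variation_zigzag _ b0 b14 G10 zG) // lte_fin.
move=> t t0; exists (peaks b 14%N (~~ s)).
  split; first by case: zG => /peaks_uniq.
  by move=> x; rewrite (local_max_T_zigzag _ b0 b14 (Gpm_periodic s) zG).
apply: total_variation_zigzag_lt => //; first by rewrite G10.
- by move=> x; apply: powR_gt0.
- exact: zigzag_powR.
Qed.
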